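(* Let $0\le N_n\le n$ be integers with $N_n/n\to1$ and $D_n=n-N_n\to\infty$. Let $R_n=n/D_n$ and define, for $0\le k\le D_n$, $$\tilde f_{k,n}=\frac{(k+N_n)!\,D_n!}{k!\,n!}\,R_n^{\,D_n-k}.$$ Let $\log\tilde f(t)=t-1-t\log t$ for $0\le t\le1$. Then $$\lim_{n\to\infty}\sup_{0\le k\le D_n}\Big|\frac{1}{D_n}\log\tilde f_{k,n}-\log\tilde f\big(\tfrac{k}{D_n}\big)\Big|=0.$$
   Context: $0\log0=0$. *)

From Stdlib Require Export Reals Arith Factorial.
Open Scope R_scope.

Definition logftilde (t : R) : R :=
  t - 1 - (if Req_EM_T t 0 then 0 else t * ln t).

Definition ftilde (N : nat -> nat) (k n : nat) : R :=
  let D := (n - N n)%nat in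
  INR (fact (k + N n)) * INR (fact D) / (INR (fact k) * INR (fact n))
    * (INR n / INR D) ^ (D - k).

Fixpoint supUpTo (g : nat -> R) (m : nat) : R :=
  match m with
  | O => g O
  | S m' => Rmax (supUpTo g m') (g (S m'))
  end.

Definition supErr (N : nat -> nat) (n : nat) : R :=
  let D := (n - N n)%nat in
  supUpTo (fun k => Rabs (/ INR D * ln (ftilde N k n) - logftilde (INR k / INR D))) D.

From Stdlib Require Import Reals Lra Lia.
Open Scope R_scope.

(* Write D = n - N n and M = N n.  Taking logarithms,
   D * ((1/D) log f~_{k,n} - log f~(k/D)) = T + h(D) - h(k), where
     h(m) = log m! - m log m + m   (the Stirling remainder, 0 <= h(m) <= 1 + log m),
     T    = log (k+M)! - log n! + (D-k) log n,
   and comparing log n! - log (k+M)! with the sum of D-k logarithms between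
   log (k+M) and log n gives 0 <= T <= D (log n - log M).  Hence, uniformly in
   0 <= k <= D,
     |(1/D) log f~_{k,n} - log f~(k/D)| <= (1 + log D)/D + (log n - log M).
   The first term tends to 0 because D -> oo (log D <= 2 sqrt D), the second
   because M/n -> 1.  The file first collects elementary logarithm estimates,
   then the factorial estimates, then the uniform pointwise bound, then the
   two limits, and finally concludes by squeezing the finite supremum. *)

(* Stdlib's [ln] is 0 outside (0, oo); this realizes the convention 0 log 0 = 0. *)
Lemma ln_0 : ln 0 = 0.
Proof.
  unfold ln; destruct Rlt_dec as [H|H]; [destruct (Rlt_irrefl 0 H) | reflexivity].
Qed.

Lemma ln_le x y : 0 < x -> x <= y -> ln x <= ln y.
Proof.
  intros Hx Hxy; destruct (Rle_lt_or_eq_dec _ _ Hxy) as [H|H].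
  - left; apply ln_increasing; assumption.
  - subst; lra.
Qed.

(* The tangent line at 1 lies above the concave logarithm. *)
Lemma ln_le_sub1 y : 0 < y -> ln y <= y - 1.
Proof.
  intros Hy; rewrite <- (exp_ln y Hy) at 2.
  destruct (Req_dec (ln y) 0) as [H|H].
  - rewrite H, exp_0; lra.
  - pose proof (exp_ineq1 (ln y) H); lra.
Qed.

Lemma ln_diff_bounds a b : 0 < a -> a <= b ->
  (b - a) / b <= ln b - ln a <= (b - a) / a.
Proof.
  intros Ha Hab.
  assert (Hb : 0 < b) by lra.
  pose proof (ln_le_sub1 (a / b) ltac:(apply Rdiv_lt_0_compat; lra)) as Hab'.
  pose proof (ln_le_sub1 (b / a) ltac:(apply Rdiv_lt_0_compat; lra)) as Hba.
  unfold Rdiv in Hab', Hba.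
  rewrite ln_mult, ln_Rinv in Hab', Hba by (try apply Rinv_0_lt_compat; lra).
  replace (a * / b - 1) with (- ((b - a) / b)) in Hab' by (field; lra).
  replace (b * / a - 1) with ((b - a) / a) in Hba by (field; lra).
  lra.
Qed.

Lemma one_plus_ln_le_sqrt x : 0 < x -> 1 + ln x <= 2 * sqrt x.
Proof.
  intros Hx.
  assert (Hs : 0 < sqrt x) by (apply sqrt_lt_R0; lra).
  rewrite <- (sqrt_sqrt x) at 1 by lra.
  rewrite ln_mult by exact Hs.
  pose proof (ln_le_sub1 _ Hs); lra.
Qed.

Lemma INR_fact_pos m : 0 < INR (fact m).
Proof. apply lt_0_INR, lt_O_fact. Qed.

Lemma ln_fact_S m : ln (INR (fact (S m))) = ln (INR (S m)) + ln (INR (fact m)).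
Proof.
  change (fact (S m)) with (S m * fact m)%nat.
  rewrite mult_INR, ln_mult; [reflexivity | apply lt_0_INR; lia | apply INR_fact_pos].
Qed.

Definition stirling_rem (m : nat) : R := ln (INR (fact m)) - INR m * ln (INR m) + INR m.

(* 0 <= h(m) <= 1 + log m: each step h(m+1) - h(m) = 1 - m log(1 + 1/m)
   lies between 0 and 1/(m+1) <= log(m+1) - log m. *)
Lemma stirling_rem_bounds m : 0 <= stirling_rem m <= 1 + ln (INR m).
Proof.
  induction m as [|m IH].
  - unfold stirling_rem; simpl; rewrite ln_1, ln_0; lra.
  - destruct m as [|m].
    + unfold stirling_rem; simpl; rewrite ln_1; lra.
    + set (x := INR (S m)) in *.
      assert (Hx : 0 < x) by (apply lt_0_INR; lia).
      assert (Step : stirling_rem (S (S m))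
                     = stirling_rem (S m) + 1 - x * (ln (x + 1) - ln x)).
      { unfold stirling_rem; rewrite ln_fact_S, (S_INR (S m)); fold x; ring. }
      rewrite Step, (S_INR (S m)); fold x.
      pose proof (ln_diff_bounds x (x + 1) Hx ltac:(lra)) as [Lo Hi].
      replace (x + 1 - x) with 1 in Lo, Hi by ring.
      assert (Lo' : x * (1 / (x + 1)) <= x * (ln (x + 1) - ln x))
        by (apply Rmult_le_compat_l; lra).
      assert (Hi' : x * (ln (x + 1) - ln x) <= x * (1 / x))
        by (apply Rmult_le_compat_l; lra).
      replace (x * (1 / x)) with 1 in Hi' by (field; lra).
      replace (x * (1 / (x + 1))) with (1 - 1 / (x + 1)) in Lo' by (field; lra).
      lra.
Qed.

(* log (a+d)! - log a! is a sum of d logarithms, each between log a and log (a+d). *)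
Lemma ln_fact_shift_bounds a d : (1 <= a)%nat ->
  INR d * ln (INR a) <= ln (INR (fact (a + d))) - ln (INR (fact a))
                     <= INR d * ln (INR (a + d)).
Proof.
  intros Ha; induction d as [|d IH].
  - rewrite Nat.add_0_r; simpl; lra.
  - replace (a + S d)%nat with (S (a + d)) by lia.
    rewrite ln_fact_S, S_INR.
    assert (La : ln (INR a) <= ln (INR (S (a + d))))
      by (apply ln_le; [apply lt_0_INR | apply le_INR]; lia).
    assert (Lad : ln (INR (a + d)) <= ln (INR (S (a + d))))
      by (apply ln_le; [apply lt_0_INR | apply le_INR]; lia).
    assert (Hd : 0 <= INR d) by apply pos_INR.
    assert (INR d * ln (INR (a + d)) <= INR d * ln (INR (S (a + d))))
      by (apply Rmult_le_compat_l; lra).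
    lra.
Qed.

Lemma tail_term_bounds M D k : (1 <= M)%nat -> (k <= D)%nat ->
  0 <= ln (INR (fact (k + M))) - ln (INR (fact (M + D))) + INR (D - k) * ln (INR (M + D))
    <= INR D * (ln (INR (M + D)) - ln (INR M)).
Proof.
  intros HM HkD.
  pose proof (ln_fact_shift_bounds (k + M) (D - k) ltac:(lia)) as Hshift.
  replace (k + M + (D - k))%nat with (M + D)%nat in Hshift by lia.
  assert (L1 : ln (INR M) <= ln (INR (k + M)))
    by (apply ln_le; [apply lt_0_INR | apply le_INR]; lia).
  assert (L2 : ln (INR (k + M)) <= ln (INR (M + D)))
    by (apply ln_le; [apply lt_0_INR | apply le_INR]; lia).
  assert (Hdk : INR (D - k) <= INR D) by (apply le_INR; lia).
  assert (0 <= INR (D - k)) by apply pos_INR.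
  assert (INR (D - k) * (ln (INR (M + D)) - ln (INR (k + M)))
          <= INR (D - k) * (ln (INR (M + D)) - ln (INR M)))
    by (apply Rmult_le_compat_l; lra).
  assert (INR (D - k) * (ln (INR (M + D)) - ln (INR M))
          <= INR D * (ln (INR (M + D)) - ln (INR M)))
    by (apply Rmult_le_compat_r; lra).
  lra.
Qed.

Lemma stirling_rem_gap D k : (1 <= D)%nat -> (k <= D)%nat ->
  Rabs (stirling_rem D - stirling_rem k) <= 1 + ln (INR D).
Proof.
  intros HD HkD.
  pose proof (stirling_rem_bounds D); pose proof (stirling_rem_bounds k).
  assert (ln (INR k) <= ln (INR D)).
  { destruct k as [|k].
    - simpl; rewrite ln_0, <- ln_1; apply ln_le; [lra | apply (le_INR 1); lia].
    - apply ln_le; [apply lt_0_INR | apply le_INR]; lia. }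
  apply Rabs_le; lra.
Qed.

(* log f~(k/D) in terms of k log k and k log D (also valid for k = 0 since ln 0 = 0). *)
Lemma logftilde_frac k D : 0 < D -> 0 <= k ->
  logftilde (k / D) = k / D - 1 - (k * ln k - k * ln D) / D.
Proof.
  intros HD Hk; unfold logftilde.
  destruct (Req_EM_T (k / D) 0) as [E|E].
  - assert (k = 0) as ->.
    { replace k with (k / D * D) by (field; lra); rewrite E; ring. }
    field; lra.
  - assert (k <> 0) by (intro; subst; apply E; unfold Rdiv; ring).
    unfold Rdiv; rewrite ln_mult, ln_Rinv by (try apply Rinv_0_lt_compat; lra).
    field; lra.
Qed.

Ltac INR_pos :=
  repeat first [ apply INR_fact_pos | apply Rmult_lt_0_compat
               | apply Rinv_0_lt_compat | apply pow_lt | apply lt_0_INR; lia ].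

Lemma ln_ftilde N k n : (1 <= n)%nat -> (1 <= n - N n)%nat ->
  ln (ftilde N k n)
  = ln (INR (fact (k + N n))) + ln (INR (fact (n - N n))) - ln (INR (fact k))
    - ln (INR (fact n)) + INR (n - N n - k) * (ln (INR n) - ln (INR (n - N n))).
Proof.
  intros Hn HD; unfold ftilde, Rdiv; cbv zeta.
  rewrite ln_mult, ln_mult, ln_Rinv, ln_mult, ln_mult, ln_pow, ln_mult, ln_Rinv
    by INR_pos.
  ring.
Qed.

Lemma pointwise_error_bound N n k :
  (N n <= n)%nat -> (1 <= N n)%nat -> (1 <= n - N n)%nat -> (k <= n - N n)%nat ->
  Rabs (/ INR (n - N n) * ln (ftilde N k n) - logftilde (INR k / INR (n - N n)))
  <= (1 + ln (INR (n - N n))) / INR (n - N n) + (ln (INR n) - ln (INR (N n))).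
Proof.
  intros HNn HM HD HkD.
  rewrite ln_ftilde by lia.
  rewrite logftilde_frac by (apply pos_INR || (apply lt_0_INR; lia)).
  set (M := N n) in *; set (D := (n - M)%nat) in *.
  assert (Hn : n = (M + D)%nat) by lia.
  clearbody M D; subst n.
  pose proof (tail_term_bounds M D k HM HkD) as HT.
  pose proof (stirling_rem_gap D k HD HkD) as Hgap.
  assert (HDpos : 0 < INR D) by (apply lt_0_INR; lia).
  set (T := ln (INR (fact (k + M))) - ln (INR (fact (M + D)))
            + INR (D - k) * ln (INR (M + D))) in HT.
  (* D times the error equals T + h(D) - h(k). *)
  assert (Err : / INR D * (ln (INR (fact (k + M))) + ln (INR (fact D)) - ln (INR (fact k))
                  - ln (INR (fact (M + D)))
                  + INR (D - k) * (ln (INR (M + D)) - ln (INR D)))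
                - (INR k / INR D - 1 - (INR k * ln (INR k) - INR k * ln (INR D)) / INR D)
                = (T + (stirling_rem D - stirling_rem k)) / INR D).
  { unfold T, stirling_rem; rewrite minus_INR by lia; field; lra. }
  rewrite Err.
  assert (Hnum : Rabs (T + (stirling_rem D - stirling_rem k))
                 <= INR D * (ln (INR (M + D)) - ln (INR M)) + (1 + ln (INR D))).
  { pose proof (Rabs_triang T (stirling_rem D - stirling_rem k)).
    rewrite (Rabs_pos_eq T) in * by lra; lra. }
  replace ((1 + ln (INR D)) / INR D + (ln (INR (M + D)) - ln (INR M)))
    with ((INR D * (ln (INR (M + D)) - ln (INR M)) + (1 + ln (INR D))) / INR D)
    by (field; lra).
  unfold Rdiv; rewrite Rabs_mult, Rabs_inv, (Rabs_pos_eq (INR D)) by lra.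
  apply Rmult_le_compat_r; [left; apply Rinv_0_lt_compat |]; lra.
Qed.

Lemma supUpTo_bound g m B :
  (forall k, (k <= m)%nat -> 0 <= g k <= B) -> 0 <= supUpTo g m <= B.
Proof.
  induction m as [|m IH]; intros H; simpl.
  - apply H; lia.
  - pose proof (IH (fun k hk => H k ltac:(lia))).
    pose proof (H (S m) (le_n _)).
    pose proof (Rmax_l (supUpTo g m) (g (S m))).
    split; [lra | apply Rmax_lub; lra].
Qed.

Lemma Un_cv_squeeze0 (u v : nat -> R) (M : nat) :
  (forall n, (n >= M)%nat -> 0 <= u n <= v n) -> Un_cv v 0 -> Un_cv u 0.
Proof.
  intros Huv Hv eps Heps.
  destruct (Hv eps Heps) as [M' HM'].
  exists (max M M'); intros n Hn.
  specialize (HM' n ltac:(lia)); specialize (Huv n ltac:(lia)).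
  unfold R_dist in *; rewrite Rminus_0_r in *.
  rewrite Rabs_pos_eq in * by lra; lra.
Qed.

Lemma ln_rate_cv (u : nat -> R) :
  cv_infty u -> Un_cv (fun n => (1 + ln (u n)) / u n) 0.
Proof.
  intros Hu eps Heps.
  destruct (Hu (Rmax 1 (4 / (eps * eps)))) as [M HM].
  exists M; intros n Hn; specialize (HM n Hn).
  pose proof (Rmax_l 1 (4 / (eps * eps))) as H1.
  pose proof (Rmax_r 1 (4 / (eps * eps))) as H2.
  set (x := u n) in *.
  assert (Hx : 0 < x) by lra.
  assert (Hs : 0 < sqrt x) by (apply sqrt_lt_R0; lra).
  assert (Hsx : sqrt x * sqrt x = x) by (apply sqrt_sqrt; lra).
  assert (Hln : 0 <= ln x) by (rewrite <- ln_1; apply ln_le; lra).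
  pose proof (one_plus_ln_le_sqrt x Hx) as Hsq.
  (* eps * sqrt x > 2 since x > 4 / eps^2 *)
  assert (Heps_s : 2 < eps * sqrt x).
  { apply Rsqr_incrst_0; [| lra | apply Rmult_le_pos; lra].
    unfold Rsqr; replace (eps * sqrt x * (eps * sqrt x)) with (eps * eps * x)
      by (rewrite <- Hsx at 1; ring).
    apply (Rmult_lt_reg_r (/ (eps * eps))); [apply Rinv_0_lt_compat; nra|].
    replace (eps * eps * x * / (eps * eps)) with x by (field; lra).
    unfold Rdiv in H2; lra. }
  unfold R_dist; rewrite Rminus_0_r, Rabs_pos_eq by (apply Rle_mult_inv_pos; lra).
  apply (Rmult_lt_reg_r x); [exact Hx|].
  unfold Rdiv; rewrite Rmult_assoc, Rinv_l, Rmult_1_r by lra.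
  assert (Hlt : 2 * sqrt x < eps * sqrt x * sqrt x) by (apply Rmult_lt_compat_r; lra).
  rewrite Rmult_assoc, Hsx in Hlt; lra.
Qed.

Lemma ratio_near_1_pos a b : 0 <= a -> a <= b -> Rabs (a / b - 1) < 1 / 2 -> 0 < a.
Proof.
  intros Ha Hab Hr; apply Rabs_def2 in Hr.
  destruct Ha as [Ha|<-]; [exact Ha|].
  unfold Rdiv in Hr; rewrite Rmult_0_l in Hr; lra.
Qed.

Lemma ln_ratio_cv (a b : nat -> R) :
  (forall n, 0 <= a n <= b n) -> Un_cv (fun n => a n / b n) 1 ->
  Un_cv (fun n => ln (b n) - ln (a n)) 0.
Proof.
  intros Hab Hr eps Heps.
  destruct (Hr (Rmin (1 / 2) (eps / 2))) as [M HM]; [apply Rmin_pos; lra|].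
  exists M; intros n Hn; specialize (HM n Hn); unfold R_dist in *.
  pose proof (Rmin_l (1 / 2) (eps / 2)); pose proof (Rmin_r (1 / 2) (eps / 2)).
  destruct (Hab n) as [Ha Hb].
  assert (Hapos : 0 < a n) by (apply (ratio_near_1_pos _ (b n)); lra).
  pose proof (ln_diff_bounds (a n) (b n) Hapos Hb) as [Lo Hi].
  assert (Hlo : 0 <= (b n - a n) / b n) by (apply Rle_mult_inv_pos; lra).
  (* (b - a)/a = (1 - r)/r <= 2 (1 - r) with r = a/b >= 1/2 *)
  set (r := a n / b n) in HM.
  assert (Hr_a : a n = r * b n) by (unfold r; field; lra).
  assert (Hrange : 1 / 2 < r <= 1).
  { apply Rabs_def2 in HM; split; [lra | nra]. }
  assert (Hquot : (b n - a n) / a n <= 2 * (1 - r)).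
  { rewrite Hr_a; apply (Rmult_le_reg_r (r * b n)); [nra|].
    unfold Rdiv; rewrite Rmult_assoc, Rinv_l, Rmult_1_r by nra; nra. }
  rewrite Rminus_0_r, Rabs_pos_eq by lra.
  apply Rabs_def2 in HM; lra.
Qed.

Theorem mainTheorem10 (N : nat -> nat)
  (hN : forall n, (N n <= n)%nat)
  (hratio : Un_cv (fun n => INR (N n) / INR n) 1)
  (hD : cv_infty (fun n => INR (n - N n)%nat)) :
  Un_cv (supErr N) 0.
Proof.
  (* Eventually both N n and D = n - N n are positive. *)
  destruct (hratio (1 / 2) ltac:(lra)) as [M1 HM1].
  destruct (hD 0) as [M2 HM2].
  apply (Un_cv_squeeze0 _
           (fun n => (1 + ln (INR (n - N n))) / INR (n - N n)
                     + (ln (INR n) - ln (INR (N n))))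
           (max M1 M2)).
  - intros n Hn.
    assert (HM : (1 <= N n)%nat).
    { apply INR_lt, (ratio_near_1_pos _ (INR n)), HM1;
        [apply pos_INR | apply le_INR, hN | lia]. }
    assert (HD : (1 <= n - N n)%nat) by (apply INR_lt, HM2; lia).
    unfold supErr; cbv zeta.
    apply supUpTo_bound; intros k Hk.
    split; [apply Rabs_pos | apply pointwise_error_bound; auto].
  - rewrite <- (Rplus_0_r 0).
    apply CV_plus; [apply ln_rate_cv, hD |].
    apply ln_ratio_cv; [intro n; split; [apply pos_INR | apply le_INR, hN] | exact hratio].
Qed.
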